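(* The fine transition function $\phi:\mathrm{Conf}\to\mathrm{Conf}$ is the left Kan extension of the fully shifted sub-local transition function $\underline{\delta}:\mathrm{Sub}\to\mathrm{Conf}$ along the (monotonic) projection $\pi_2:\mathrm{Sub}\to\mathrm{Conf}$, $\pi_2(g,c)=c$. That is, $\underline{\delta}\Rightarrow\phi\circ\pi_2$, and for every monotonic $f:\mathrm{Conf}\to\mathrm{Conf}$ with $\underline{\delta}\Rightarrow f\circ\pi_2$ we have $\phi\Rightarrow f$.
   Context: A cellular automaton is given by a group $G$, a neighborhood $N\subseteq G$ (not necessarily finite), a finite set of states $Q$ and $\delta:Q^N\to Q$. $\mathrm{Conf}$ is the set of partial functions $G\to Q$ with support $|c|$; $c\restriction S$ is restriction to $S\cap|c|$; $\mathrm{Conf}$ is partially ordered by $c\preceq c'$ iff for all $g\in|c|$, $g\in|c'|$ and $c(g)=c'(g)$. For $c\in\mathrm{Conf}$, $g\in G$, $c\blacktriangleleft g$ has support $\{h\mid g\cdot h\in|c|\}$ and $(c\blacktriangleleft g)(h)=c(g\cdot h)$. $g\cdot M=\{g\cdot m\mid m\in M\}$. $c_g=c\restriction(g\cdot N\cap|c|)$; $\det(c)=\{g\in G\mid \exists q\in Q\ \forall c'\in Q^{g\cdot N}:\ c'\restriction|c_g|=c_g\implies \delta(c'\blacktriangleleft g)=q\}$ and $q_{c,g}$ is the unique such $q$. The fine transition function $\phi$ has $|\phi(c)|=\det(c)$ and $\phi(c)(g)=q_{c,g}$. $\mathrm{Sub}=\bigcup_{g\in G,\,M\subseteq N}(\{g\}\times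 Q^{g\cdot M})$ ordered by $(g,c)\preceq(g',c')$ iff $g=g'$ and $c\preceq c'$; $\underline{\delta}(g,c)$ is the configuration with support $\{g\}\cap\det(c)$ and, if $g\in\det(c)$, value $q_{c,g}$ at $g$. For posets $X,Y$, $f:X\to Y$ is monotonic if $x\preceq x'\Rightarrow f(x)\preceq f(x')$; for monotonic $f,f'$, $f\Rightarrow f'$ iff $f(x)\preceq f'(x)$ for all $x$. Given posets $A,B,C$ and monotonic $i:A\to B$, $f:A\to C$, a monotonic $g:B\to C$ is the left Kan extension of $f$ along $i$ if it is the $\Rightarrow$-minimum of $\{h:B\to C\text{ monotonic}\mid f\Rightarrow h\circ i\}$. *)

From Stdlib Require Import ClassicalEpsilon.
From mathcomp Require Import all_boot.

Set Implicit Arguments.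
Unset Strict Implicit.
Unset Printing Implicit Defensive.

Definition monotone (X Y : Type) (leX : X -> X -> Prop) (leY : Y -> Y -> Prop)
  (f : X -> Y) : Prop := forall x x', leX x x' -> leY (f x) (f x').

Definition nat_le (X Y : Type) (leY : Y -> Y -> Prop) (f f' : X -> Y) : Prop :=
  forall x, leY (f x) (f' x).

Definition is_left_Kan_ext (A B C : Type)
  (leA : A -> A -> Prop) (leB : B -> B -> Prop) (leC : C -> C -> Prop)
  (i : A -> B) (f : A -> C) (g : B -> C) : Prop :=
  [/\ monotone leA leB i, monotone leA leC f,
      monotone leB leC g,
      nat_le leC f (fun a => g (i a)) &
      forall h : B -> C, monotone leB leC h -> nat_le leC f (fun a => h (i a)) ->
        nat_le leC g h].

Section CA.
Variables (G : Type) (mul : G -> G -> G).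
Variable (N : G -> Prop).
Variable (Q : finType).
Variable (delta : ({n : G | N n} -> Q) -> Q).

(* Conf: partial functions G -> Q; support = {g | c g <> None} *)
Definition Conf := G -> option Q.

Definition conf_le (c c' : Conf) : Prop :=
  forall g, c g <> None -> c' g = c g.

Definition translate (g : G) (M : G -> Prop) : G -> Prop :=
  fun x => exists m, M m /\ x = mul g m.

Definition gN (g : G) := translate g N.

Definition shift_pt (g : G) (n : {n : G | N n}) : {x : G | gN g x} :=
  exist (gN g) (mul g (proj1_sig n))
        (ex_intro _ (proj1_sig n) (conj (proj2_sig n) erefl)).

(* g in det(c) with q_{c,g} = q :
   for every c' in Q^{g.N} with c' restricted to |c_g| equal to c_g
   (c_g = c restricted to g.N /\ |c|), delta (c' <| g) = q. *)
Definition det_val (c : Conf) (g : G) (q : Q) : Prop :=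
  forall c' : {x : G | gN g x} -> Q,
    (forall x : {x : G | gN g x}, c (proj1_sig x) <> None ->
        c (proj1_sig x) = Some (c' x)) ->
    delta (fun n => c' (shift_pt g n)) = q.

Definition in_det (c : Conf) (g : G) : Prop := exists q, det_val c g q.

(* fine transition function: |phi c| = det(c), phi c g = q_{c,g} *)
Definition phi (c : Conf) : Conf := fun g =>
  epsilon (inhabits None) (fun o : option Q => forall q, o = Some q <-> det_val c g q).

(* Sub = U_{g in G, M subset N} {g} x Q^{g.M} *)
Definition is_sub (p : G * Conf) : Prop :=
  exists M : G -> Prop, (forall m, M m -> N m) /\
    forall x, p.2 x <> None <-> translate p.1 M x.

Definition Sub := {p : G * Conf | is_sub p}.

Definition sub_le (s s' : Sub) : Prop :=
  (proj1_sig s).1 = (proj1_sig s').1 /\ conf_le (proj1_sig s).2 (proj1_sig s').2.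

Definition pi2 (s : Sub) : Conf := (proj1_sig s).2.

(* fully shifted sub-local transition function: support {g} /\ det(c) *)
Definition sub_delta (s : Sub) : Conf := fun h =>
  if excluded_middle_informative (h = (proj1_sig s).1)
  then phi (proj1_sig s).2 h else None.

End CA.

From Pilot Require Import Defs.
From Stdlib Require Import ClassicalEpsilon.
From mathcomp Require Import all_boot.

(* Everything rests on two properties of "g is determined with value q by c"
   (det_val c g q):
   - monotonicity: enlarging c keeps g determined with the same value, which
     makes phi (hence also sub_delta) monotone and gives sub_delta ==> phi o pi2;
   - locality: det_val c g q only inspects c on the neighbourhood g.N, so it
     still holds for the restriction c_g of c to g.N.
   For minimality, given a monotone f with sub_delta ==> f o pi2 and a point g
   with phi c g = q, the pair (g, c_g) is an element of Sub on which sub_delta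
   takes the value q at g; hence f c_g g = q, and f c g = q because c_g <= c. *)

Section FineTransition.
Variables (G : Type) (mul : G -> G -> G) (N : G -> Prop) (Q : finType)
  (delta : ({n : G | N n} -> Q) -> Q).

Local Notation Conf := (Conf G Q).
Local Notation det_val := (det_val mul delta).
Local Notation phi := (phi mul delta).
Local Notation gN := (gN mul N).
Local Notation sub_delta := (@sub_delta G mul N Q delta).

(* phi c g is defined exactly when g is determined by c, with value q_{c,g};
   this uses that the determined value is unique when it exists. *)
Lemma phi_spec (c : Conf) g q : phi c g = Some q <-> det_val c g q.
Proof.
rewrite /phi; revert q.
apply: (epsilon_spec (inhabits None)
   (fun o : option Q => forall q, o = Some q <-> det_val c g q)).
have [[q Hq]|Hnone] := classic (exists q, det_val c g q); last first.
  by exists None => q; split=> // Hq; case: Hnone; exists q.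
exists (Some q) => q'; split=> [[<-] //|Hq'].
pose c' (x : {x : G | gN g x}) : Q := if c (proj1_sig x) is Some a then a else q.
have Hc' x : c (proj1_sig x) <> None -> c (proj1_sig x) = Some (c' x).
  by rewrite /c'; case: (c (proj1_sig x)).
by rewrite -(Hq c' Hc') -(Hq' c' Hc').
Qed.

Lemma det_val_mono (c c' : Conf) g q :
  conf_le c c' -> det_val c g q -> det_val c' g q.
Proof.
move=> Hle Hdet c'' Hc''; apply: Hdet => x Hx.
by rewrite -(Hle _ Hx); apply: Hc''; rewrite (Hle _ Hx).
Qed.

Lemma phi_mono : monotone (@conf_le G Q) (@conf_le G Q) phi.
Proof.
move=> c c' Hle g; case E: (phi c g) => [q|] // _.
by apply/phi_spec; apply: det_val_mono Hle _; apply/phi_spec.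
Qed.

Definition restrict (c : Conf) (S : G -> Prop) : Conf := fun x =>
  if excluded_middle_informative (S x) then c x else None.

Lemma restrict_in (c : Conf) (S : G -> Prop) x : S x -> restrict c S x = c x.
Proof. by rewrite /restrict; case: excluded_middle_informative. Qed.

Lemma restrict_out (c : Conf) (S : G -> Prop) x : ~ S x -> restrict c S x = None.
Proof. by rewrite /restrict; case: excluded_middle_informative. Qed.

Lemma restrict_le (c : Conf) (S : G -> Prop) : conf_le (restrict c S) c.
Proof.
move=> x; have [Hx|Hx] := classic (S x).
  by rewrite restrict_in.
by rewrite restrict_out.
Qed.

Lemma det_val_restrict (c : Conf) g q :
  det_val c g q -> det_val (restrict c (gN g)) g q.
Proof.
move=> Hdet c'' Hc''; apply: Hdet => x Hx.
have Ex := @restrict_in c (gN g) _ (proj2_sig x).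
by rewrite -Ex; apply: Hc''; rewrite Ex.
Qed.

(* (g, c_g) is an element of Sub: its support is g.M for
   M = { m in N | g.m in |c| }. *)
Lemma restrict_is_sub (c : Conf) g : is_sub mul N (g, restrict c (gN g)).
Proof.
exists (fun m => N m /\ c (mul g m) <> None); split=> [m [] //|x /=].
have [Hx|Hx] := classic (gN g x); last first.
  rewrite restrict_out //; split=> // -[m [[Hm _] Ex]].
  by case: Hx; exists m.
rewrite restrict_in //; split=> [Hc|[m [[_ Hc] ->]] //].
by have [m [Hm Ex]] := Hx; exists m; rewrite -Ex.
Qed.

Definition restrict_sub (c : Conf) g : Defs.Sub mul N Q :=
  exist _ (g, restrict c (gN g)) (restrict_is_sub c g).

Lemma sub_delta_at (s : Defs.Sub mul N Q) :
  sub_delta s (proj1_sig s).1 = phi (proj1_sig s).2 (proj1_sig s).1.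
Proof. by rewrite /sub_delta; case: excluded_middle_informative. Qed.

(* Unit of the Kan extension: sub_delta ==> phi o pi2, as sub_delta (g, c)
   is phi c cut down to {g}. *)
Lemma sub_delta_le_phi : nat_le (@conf_le G Q) sub_delta
  (fun s => phi (pi2 s)).
Proof.
by move=> s h; rewrite /sub_delta /pi2; case: excluded_middle_informative.
Qed.

Lemma pi2_mono : monotone (@sub_le G mul N Q) (@conf_le G Q) (@pi2 G mul N Q).
Proof. by move=> s s' []. Qed.

Lemma sub_delta_mono :
  monotone (@sub_le G mul N Q) (@conf_le G Q) sub_delta.
Proof.
move=> s s' [Eg Hle] h; rewrite /sub_delta -Eg.
by case: excluded_middle_informative => // Eh; apply: phi_mono.
Qed.

Lemma phi_minimal (f : Conf -> Conf) :
  monotone (@conf_le G Q) (@conf_le G Q) f ->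
  nat_le (@conf_le G Q) sub_delta (fun s => f (pi2 s)) ->
  nat_le (@conf_le G Q) phi f.
Proof.
move=> Hf Hsub c g; case E: (phi c g) => [q|] // _.
have Hsubg : sub_delta (restrict_sub c g) g = Some q.
  rewrite (sub_delta_at (restrict_sub c g)) /=.
  by apply/phi_spec/det_val_restrict/phi_spec.
have Hfg : f (restrict c (gN g)) g = Some q.
  by have := Hsub (restrict_sub c g) g; rewrite Hsubg => ->.
by rewrite (Hf _ _ (restrict_le c (gN g)) g) Hfg.
Qed.

End FineTransition.

Theorem mainTheorem16
  (G : Type) (mul : G -> G -> G) (one : G) (inv : G -> G)
  (mulA : forall x y z, mul x (mul y z) = mul (mul x y) z)
  (mul1g : forall x, mul one x = x)
  (mulVg : forall x, mul (inv x) x = one)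
  (N : G -> Prop) (Q : finType) (delta : ({n : G | N n} -> Q) -> Q) :
  is_left_Kan_ext (@sub_le G mul N Q) (@conf_le G Q) (@conf_le G Q)
    (@pi2 G mul N Q) (@sub_delta G mul N Q delta) (@phi G mul N Q delta).
Proof.
split.
- exact: pi2_mono.
- exact: sub_delta_mono.
- exact: phi_mono.
- exact: sub_delta_le_phi.
- exact: phi_minimal.
Qed.
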